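(* Let $K_{m_1,m_2}$ be the complete bipartite graph with bipartition $(X,Y)$, $X=\{x_1,\dots,x_{m_1}\}$, $Y=\{y_1,\dots,y_{m_2}\}$, where $2\le m_1\le m_2$. Let $s$ and $i$ be integers with $\max\{1,s-m_2\}\le i\le \min\{m_1,s-1\}$ and $s\ge m_2-m_1+3$, and let $S_i=\{x_1,\dots,x_i,y_1,\dots,y_{s-i}\}$. If $2i> m_1+s-m_2$, then $$\kappa^*_{K_{m_1,m_2}}(S_i)\ge\begin{cases} m_1-i+\left\lfloor\frac{i}{2}\right\rfloor, & \text{if } m_1+s-m_2<2i\le \frac{4(m_1+s-m_2)}{3},\\[2pt] m_2-s+i, & \text{if } \frac{4(m_1+s-m_2)}{3}<2i\le 2(m_1+s-m_2),\\[2pt] m_1, & \text{if } 2i>2(m_1+s-m_2).\end{cases}$$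
   Context: For $S\subseteq V(G)$ with $|S|\ge 2$, an $S$-Steiner tree of $G$ is a subtree $T$ of $G$ with $S\subseteq V(T)$ all of whose leaves belong to $S$. A family of $S$-Steiner trees $T_1,\dots,T_k$ is completely independent if for all $1\le p<q\le k$: $E(T_p)\cap E(T_q)=\emptyset$, $V(T_p)\cap V(T_q)=S$, and for any two vertices $x_1,x_2\in S$ the $(x_1,x_2)$-paths in $T_p$ and in $T_q$ are internally disjoint. $\kappa^*_G(S)$ is the maximum number of trees in a completely independent family of $S$-Steiner trees in $G$. *)

(* Simple graphs on a finType T given by a symmetric
   irreflexive adjacency relation adj; subgraphs given by a vertex set
   V : {set T} and an edge set E : {set {set T}} of 2-element sets. *)
From Stdlib Require Import ClassicalEpsilon.
From mathcomp Require Import all_boot.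
Set Implicit Arguments. Unset Strict Implicit. Unset Printing Implicit Defensive.

Section Graphs.
Variable T : finType.
Variable adj : rel T.

Definition pb (P : Prop) : bool :=
  if excluded_middle_informative P then true else false.

Definition is_edge (e : {set T}) : Prop := exists x y, adj x y /\ e = [set x; y].

Definition subgraph (V : {set T}) (E : {set {set T}}) : Prop :=
  forall e, e \in E -> is_edge e /\ e \subset V.

Definition erel (E : {set {set T}}) : rel T := fun a b => [set a; b] \in E.

Definition is_path (E : {set {set T}}) (x y : T) (p : seq T) : bool :=
  [&& path (erel E) x p, last x p == y & uniq (x :: p)].

Definition connected_sg (V : {set T}) (E : {set {set T}}) : Prop :=
  forall x y, x \in V -> y \in V -> exists p, is_path E x y p.

(* a cycle x :: p (length >= 3) closed by the edge {last, x} *)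
Definition has_cycle (E : {set {set T}}) : Prop :=
  exists x p, 2 <= size p /\ path (erel E) x p /\ uniq (x :: p) /\
              [set last x p; x] \in E.

Definition is_tree (V : {set T}) (E : {set {set T}}) : Prop :=
  [/\ subgraph V E, V != set0, connected_sg V E & ~ has_cycle E].

Definition degree (E : {set {set T}}) (v : T) : nat := #|[set e in E | v \in e]|.

Definition steiner_tree (S : {set T}) (t : {set T} * {set {set T}}) : Prop :=
  [/\ is_tree t.1 t.2, S \subset t.1 &
      forall v, v \in t.1 -> degree t.2 v = 1 -> v \in S].

Definition completely_independent (S : {set T}) (k : nat)
    (F : 'I_k -> {set T} * {set {set T}}) : Prop :=
  (forall j, steiner_tree S (F j)) /\
  forall p q : 'I_k, p != q ->
    [/\ (F p).2 :&: (F q).2 = set0,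
        (F p).1 :&: (F q).1 = S &
        forall x1 x2, x1 \in S -> x2 \in S ->
          forall P Q, is_path (F p).2 x1 x2 P -> is_path (F q).2 x1 x2 Q ->
          forall z, z \in P -> z != x2 -> z \in Q -> False].

(* Such a family has pairwise edge-disjoint trees, each
   with >= 1 edge when |S| >= 2, so its size is at most #|{set T}|. *)
Definition kappa_star (S : {set T}) : nat :=
  \max_(k < #|{set T}|.+1 |
        pb (exists F : 'I_k -> {set T} * {set {set T}},
              completely_independent S F)) k.

End Graphs.

Definition Kbip_adj (m1 m2 : nat) : rel ('I_m1 + 'I_m2) :=
  fun u v => match u, v with
             | inl _, inr _ | inr _, inl _ => true
             | _, _ => false end.

(* S_i = {x_1..x_i, y_1..y_(s-i)} (0-indexed) *)
Definition S_set (m1 m2 s i : nat) : {set 'I_m1 + 'I_m2} :=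
  [set u : 'I_m1 + 'I_m2 |
     match u with inl x => (x : nat) < i | inr y => (y : nat) < s - i end].

(* Each tree of the family is given by a parent function towards a root, with a
   depth that strictly decreases along parent links; such a function always
   yields a tree, whose internal vertices are its root and the parents.  An
   internal vertex of a path in a tree has degree at least 2, hence is internal
   in the tree, so complete independence of the family reduces to three
   disjointness facts: the vertex sets of two trees meet exactly in S, their
   edges differ, and no vertex of S is internal in two of them.

   In K_{m1,m2} with |S ∩ X| = i and |S ∩ Y| = J, some trees are rooted at a
   fresh vertex y of Y \ S joined to all of S ∩ X, each y of S hanging from a
   hub x of X.  With pairwise distinct hubs this gives min(m1, m2 - J) trees,
   which settles the last two cases.  In the first case the free vertices of
   X run out before the fresh roots do: the next trees share a pair x_(2j),
   x_(2j+1) of S as hubs, the y's choosing one of them by parity, and the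
   remaining trees live inside S with a pair of hubs on each side; parity
   keeps all these edges apart. *)
From Stdlib Require Import ClassicalEpsilon.
From mathcomp Require Import all_boot zify.
Set Implicit Arguments. Unset Strict Implicit. Unset Printing Implicit Defensive.

Lemma eq_set2 (T : finType) (a b c e : T) :
  [set a; b] = [set c; e] -> (a = c /\ b = e) \/ (a = e /\ b = c).
Proof.
move=> eq_ab.
have /set2P ha : a \in [set c; e] by rewrite -eq_ab set21.
have /set2P hb : b \in [set c; e] by rewrite -eq_ab set22.
have /set2P hc : c \in [set a; b] by rewrite eq_ab set21.
have /set2P he : e \in [set a; b] by rewrite eq_ab set22.
by case: ha hb hc he => ? [] ? [] ? [] ?; subst; auto.
Qed.

Lemma erel_sym (T : finType) (E : {set {set T}}) : symmetric (erel E).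
Proof. by move=> a b; rewrite /erel setUC. Qed.

Lemma is_path_internal_degree (T : finType) (E : {set {set T}}) x y p z :
  is_path E x y p -> z \in p -> z != y -> 1 < degree E z.
Proof.
case/and3P=> pth /eqP last_y uniq_p zp zy.
case/splitPr: zp pth last_y uniq_p => p1 [|w p2] pth last_y uniq_p.
  by rewrite last_cat /= in last_y; rewrite last_y eqxx in zy.
move: uniq_p; rewrite -cat_cons cat_uniq => /and3P[_ /hasPn/(_ w) + _].
rewrite !inE eqxx orbT => /(_ isT) wp1.
move: pth; rewrite cat_path /= => /and3P[_ uz /andP[zw _]].
have uw : last x p1 != w by apply: contraNneq wp1 => <-; exact: mem_last.
apply/card_gt1P; exists [set last x p1; z], [set z; w].
split; rewrite ?inE -?/(erel E _ _) ?uz ?zw ?eqxx ?orbT //.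
by apply: contraNneq uw => /eq_set2[[-> ->] | [-> _]].
Qed.

Section ParentTree.
Variables (T : finType) (adj : rel T) (V : {set T}) (r : T) (par : T -> T) (d : T -> nat).

Definition parent_edges : {set {set T}} := [set [set v; par v] | v in V :\ r].

Definition parent_internal (v : T) : bool := (v == r) || [exists w in V :\ r, par w == v].

Lemma degree_gt1_parent_internal v : 1 < degree parent_edges v -> parent_internal v.
Proof.
apply: contraLR => not_internal; rewrite -leqNgt -(cards1 [set v; par v]).
apply/subset_leq_card/subsetP => e; rewrite !inE => /andP[/imsetP[w wV ->]].
case/set2P => [->|vw]; first by [].
by case/negP: not_internal; apply/orP; right; apply/existsP; exists w; rewrite wV vw eqxx.
Qed.

Hypothesis r_in_V : r \in V.
Hypothesis parentP : forall v, v \in V -> v != r ->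
  [/\ par v \in V, adj v (par v) & d (par v) < d v].

Lemma parent_edges_rel a b : erel parent_edges a b ->
  (b = par a /\ d b < d a) \/ (a = par b /\ d a < d b).
Proof.
case/imsetP=> v; rewrite !inE => /andP[vr vV] /eq_set2.
by have [_ _ ?] := parentP vV vr; case=> -[-> ->]; [left | right].
Qed.

Lemma parent_of_deeper w z : erel parent_edges w z -> d z <= d w -> z = par w.
Proof.
by case/parent_edges_rel => [[-> _] | [_ lt_wz]] // /(leq_trans lt_wz); rewrite ltnn.
Qed.

Lemma connect_to_root v : v \in V -> connect (erel parent_edges) v r.
Proof.
have [n] := ubnP (d v); elim: n v => // n IH v dv vV.
have [->|vr] := eqVneq v r; first exact: connect0.
have [pV _ dpar] := parentP vV vr.
apply: connect_trans (IH _ (leq_trans dpar dv) pV); apply: connect1.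
by apply/imsetP; exists v; rewrite // !inE vr.
Qed.

Lemma parent_edges_connected : connected_sg V parent_edges.
Proof.
move=> x y xV yV.
have: connect (erel parent_edges) x y.
  apply: connect_trans (connect_to_root xV) _.
  by rewrite (sym_connect_sym (@erel_sym _ _)) connect_to_root.
case/connectP=> p + ->; case/shortenP=> q pq uq _.
by exists q; rewrite /is_path pq uq eqxx.
Qed.

Lemma parent_edges_acyclic : ~ has_cycle parent_edges.
Proof.
case=> x [p [size_p [pth [uniq_p closing]]]].
have [w wc wmax] := @arg_maxnP _ x (fun z => z \in x :: p) d (mem_head x p).
case: (rot_to wc) => n q rot_w.
have /andP[] : cycle (erel parent_edges) (w :: q) && uniq (w :: q).
  by rewrite -rot_w rot_cycle rot_uniq uniq_p andbT /= rcons_path pth.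
have qmax z : z \in q -> d z <= d w.
  by move=> zq; apply: wmax; rewrite -(mem_rot n) rot_w inE zq orbT.
have := size_rot n (x :: p); rewrite rot_w => -[size_q].
case: q {rot_w} qmax size_q => [|y [|z q]] qmax size_q; rewrite -?size_q // in size_p.
rewrite [cycle _ _]/= rcons_path => /and4P[wy _ _ lw] /and3P[_ yq _].
have py := parent_of_deeper wy (qmax y (mem_head _ _)).
have lq : last z q \in y :: z :: q by rewrite inE mem_last orbT.
have pl := parent_of_deeper (etrans (erel_sym _ _ _) lw) (qmax _ lq).
by rewrite py -pl mem_last in yq.
Qed.

Lemma parent_edges_tree : is_tree adj V parent_edges.
Proof.
have sub : subgraph adj V parent_edges.
  move=> e /imsetP[v]; rewrite !inE => /andP[vr vV] ->.
  have [pV adj_v _] := parentP vV vr; split; first by exists v, (par v).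
  by apply/subsetP => z /set2P[] ->.
split=> //; first by apply/set0Pn; exists r.
  exact: parent_edges_connected.
exact: parent_edges_acyclic.
Qed.

Lemma parent_internal_in_V v : parent_internal v -> v \in V.
Proof.
case/orP => [/eqP -> // | /existsP[w /andP[]]].
by rewrite !inE => /andP[wr wV] /eqP <-; have [] := parentP wV wr.
Qed.

Lemma parent_edges_degree_gt1 v w1 w2 : w1 \in V :\ r -> w2 \in V :\ r -> w1 != w2 ->
  v \in [set w1; par w1] -> v \in [set w2; par w2] -> 1 < degree parent_edges v.
Proof.
move=> w1V w2V w12 vw1 vw2; apply/card_gt1P; exists [set w1; par w1], [set w2; par w2].
split; [apply/setIdP; split=> //; exact: imset_f ..|].
move: w1V w2V; rewrite !inE => /andP[w1r w1V] /andP[w2r w2V].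
have [_ _ d1] := parentP w1V w1r; have [_ _ d2] := parentP w2V w2r.
apply: contraNneq w12 => /eq_set2[[-> //] | [e1 e2]].
by rewrite e2 in d1; rewrite -e1 in d2; have := ltn_trans d1 d2; rewrite ltnn.
Qed.
End ParentTree.

Lemma kappa_star_ge (T : finType) (adj : rel T) (S : {set T}) k
    (F : 'I_k -> {set T} * {set {set T}}) :
  completely_independent adj S F -> k <= #|{set T}| -> k <= kappa_star adj S.
Proof.
move=> indepF le_k; rewrite /kappa_star.
apply: (@leq_bigmax_cond _ _ (fun j : 'I_#|{set T}|.+1 => nat_of_ord j)
                         (Ordinal (le_k : k < _.+1))).
by rewrite /pb; case: excluded_middle_informative => // -[]; exists F.
Qed.

Section ParentFamily.
Variables (T : finType) (adj : rel T) (S : {set T}) (k : nat).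
Variables (V : 'I_k -> {set T}) (r : 'I_k -> T) (par : 'I_k -> T -> T) (d : 'I_k -> T -> nat).
Local Notation E t := (parent_edges (V t) (r t) (par t)).

Hypothesis root_in : forall t, r t \in V t.
Hypothesis parentP : forall t v, v \in V t -> v != r t ->
  [/\ par t v \in V t, adj v (par t v) & d t (par t v) < d t v].
Hypothesis S_sub : forall t, S \subset V t.
Hypothesis degree_outside_S : forall t v, v \in V t -> v \notin S -> 1 < degree (E t) v.
Hypothesis V_meet : forall t t', t != t' -> V t :&: V t' = S.
Hypothesis edges_differ : forall t t' v w, t != t' -> v \in V t :\ r t -> w \in V t' :\ r t' ->
  [set v; par t v] != [set w; par t' w].
Hypothesis internal_S_unique : forall t t' v, v \in S ->
  parent_internal (V t) (r t) (par t) v -> parent_internal (V t') (r t') (par t') v -> t = t'.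

Definition parent_family (t : 'I_k) := (V t, E t).

Lemma parent_family_steiner t : steiner_tree adj S (parent_family t).
Proof.
split=> /=; [exact: parent_edges_tree (root_in t) (@parentP t) | exact: S_sub |].
by move=> v vV deg1; apply: contraT => vS; have := degree_outside_S vV vS; rewrite deg1.
Qed.

Lemma parent_family_completely_independent : completely_independent adj S parent_family.
Proof.
split=> [|t t' tt' /=]; first exact: parent_family_steiner.
split; [|exact: V_meet|].
  apply/setP => e; rewrite !inE; apply/andP => -[/imsetP[v vV ->] /imsetP[w wV]].
  exact/eqP/(edges_differ tt').
move=> x1 x2 _ _ P Q pathP pathQ z zP zx2 zQ.
have internal_P := degree_gt1_parent_internal (is_path_internal_degree pathP zP zx2).
have internal_Q := degree_gt1_parent_internal (is_path_internal_degree pathQ zQ zx2).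
have zS : z \in S.
  by rewrite -(V_meet tt') inE !(parent_internal_in_V (root_in _) (@parentP _)).
by move/eqP: tt'; apply; apply: internal_S_unique zS internal_P internal_Q.
Qed.
End ParentFamily.

Lemma eq_inord n (x : 'I_n.+1) p : p < n.+1 -> (x == inord p) = (x == p :> nat).
Proof. by move=> lt_p; rewrite -val_eqE /= inordK. Qed.

(* For
   [t < nG] (an outer tree) the root is [y_(J+t)], outside [S]; the [x]'s of [S]
   and the hub [x_(phi t 0)] are its children, and [y_q] hangs from the hub
   [x_(phi t q)].  For [nG <= t < k] (an inner tree) the tree spans [S]: the root
   is [x_(2(t-a))], [y_q] hangs from [x_(2(t-a) + odd q)] and every other [x_p]
   from [y_(2(t-nG) + ~~ odd p)].  The internal vertices of tree [t] lying in
   [S] ([hub t]) are thus the hubs of an outer tree that lie in [S], and the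
   pairs [x_(2(t-a)), x_(2(t-a)+1)] and [y_(2(t-nG)), y_(2(t-nG)+1)] of an inner
   tree; [hub_parity] keeps the former away from the latter and lets each edge
   determine its tree. *)
Section CompleteBipartite.
Variables (n1 n2 s i k nG a : nat) (phi : nat -> nat -> nat).
Local Notation m1 := n1.+1.
Local Notation m2 := n2.+1.
Local Notation J := (s - i).
Local Notation T := ('I_m1 + 'I_m2)%type.
Local Notation S := (S_set m1 m2 s i).

Hypothesis two_le_i : 2 <= i.
Hypothesis i_le_m1 : i <= m1.
Hypothesis J_gt0 : 0 < J.
Hypothesis roots_fit : J + nG <= m2.
Hypothesis nG_le_k : nG <= k.
Hypothesis a_le_nG : a <= nG.
Hypothesis hub_lt_m1 : forall t q, t < nG -> q < J -> phi t q < m1.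
Hypothesis hub_in_S_or_0 : forall t q, t < nG -> q < J -> phi t q < i \/ phi t q = phi t 0.
Hypothesis hub_inj : forall t t' q q', t < nG -> t' < nG -> q < J -> q' < J ->
  phi t q = phi t' q' -> t = t'.
Hypothesis pairs_in_S : forall t, nG <= t < k -> 2 * (t - a) + 1 < i /\ 2 * (t - nG) + 1 < J.
Hypothesis hub_parity : forall t q, t < nG -> q < J -> phi t q < i -> nG < k ->
  odd (phi t q) = odd q /\ (phi t q)./2 < nG - a.

(* [inord] sends out-of-range indices to 0, hence the bounds below. *)
Definition X p : T := inl (inord p).
Definition Y q : T := inr (inord q).

Lemma eqX (x : 'I_m1) p : p < m1 -> (inl x == X p :> T) = (x == p :> nat).
Proof. by move=> lt_p; rewrite /X eqE /= eq_inord. Qed.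

Lemma eqY (y : 'I_m2) q : q < m2 -> (inr y == Y q :> T) = (y == q :> nat).
Proof. by move=> lt_q; rewrite /Y eqE /= eq_inord. Qed.

Lemma X_inj p p' : p < m1 -> p' < m1 -> X p = X p' -> p = p'.
Proof. by move=> lt_p lt_p' [/(congr1 val)]; rewrite /= !inordK. Qed.

Lemma Y_inj q q' : q < m2 -> q' < m2 -> Y q = Y q' -> q = q'.
Proof. by move=> lt_q lt_q' [/(congr1 val)]; rewrite /= !inordK. Qed.

Definition xpar t (p : nat) := if t < nG then J + t else 2 * (t - nG) + ~~ odd p.
Definition ypar t (q : nat) := if t < nG then phi t q else 2 * (t - a) + odd q.
Definition root t : T := if t < nG then Y (J + t) else X (2 * (t - a)).
Definition par t (v : T) : T :=
  match v with inl x => Y (xpar t x) | inr y => X (ypar t y) end.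
Definition depth t (v : T) : nat :=
  if t < nG then
    match v with inl _ => 1 | inr y => if y < J then 2 else 0 end
  else
    match v with
    | inl x => if x == 2 * (t - a) :> nat then 0 else if odd x then 2 else 4
    | inr y => if odd y then 3 else 1
    end.
Definition vset t : {set T} := if t < nG then Y (J + t) |: (X (phi t 0) |: S) else S.

Lemma in_S v : (v \in S) = match v with inl x => x < i | inr y => y < J end.
Proof. by rewrite inE. Qed.

Lemma in_vset t v : (v \in vset t) = match v with
  | inl x => (x < i) || (t < nG) && (x == phi t 0 :> nat)
  | inr y => (y < J) || (t < nG) && (y == J + t :> nat) end.
Proof.
rewrite /vset; case: ifP => tn; last by rewrite in_S; case: v => ? /=; rewrite orbF.
have [phi0 root_lt] : phi t 0 < m1 /\ J + t < m2 by split; [apply: hub_lt_m1 | lia].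
by rewrite !inE /X /Y; case: v => [x|y]; rewrite eqE /= eq_inord // orbC.
Qed.

Lemma X_in_vset t p : p < m1 -> (X p \in vset t) = (p < i) || (t < nG) && (p == phi t 0).
Proof. by move=> lt_p; rewrite in_vset /= inordK. Qed.

Lemma Y_in_vset t q : q < m2 -> (Y q \in vset t) = (q < J) || (t < nG) && (q == J + t).
Proof. by move=> lt_q; rewrite in_vset /= inordK. Qed.

Lemma pair_bounds t : t < k -> (t < nG) = false ->
  2 * (t - a) + 1 < i /\ 2 * (t - nG) + 1 < J.
Proof. by move=> tk tn; apply: pairs_in_S; rewrite tk andbT leqNgt tn. Qed.

Lemma root_in_vset t : t < k -> root t \in vset t.
Proof.
move=> tk; rewrite /root; case: ifP => tn; first by rewrite Y_in_vset ?tn ?eqxx ?orbT //; lia.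
by have [? ?] := pair_bounds tk tn; rewrite X_in_vset; lia.
Qed.

Lemma par_spec t : t < k -> forall v, v \in vset t -> v != root t ->
  [/\ par t v \in vset t, Kbip_adj v (par t v) & depth t (par t v) < depth t v].
Proof.
move=> tk [x|y]; rewrite in_vset /root /par /depth /xpar /ypar; case: ifP => tn /=.
- move=> _ _; have root_lt : J + t < m2 by lia.
  by rewrite Y_in_vset // tn eqxx orbT inordK //; split=> //; case: ifP; lia.
- have [xi yi] := pair_bounds tk tn; have xa : 2 * (t - a) < m1 by lia.
  have yq : 2 * (t - nG) + ~~ odd x < m2 by lia.
  rewrite eqX ?Y_in_vset /Y ?inordK //.
  by move=> x_i /negbTE ->; split; [lia | done | repeat case: ifP; lia].
- have root_lt : J + t < m2 by lia.
  rewrite eqY // => y_in y_root; have y_J : y < J by lia.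
  have hub_m1 := hub_lt_m1 tn y_J; rewrite X_in_vset // y_J; split=> //.
  by have [-> | ->] := hub_in_S_or_0 tn y_J; rewrite ?tn ?eqxx ?orbT.
- have [xi yi] := pair_bounds tk tn; have xq : 2 * (t - a) + odd y < m1 by lia.
  rewrite X_in_vset ?inordK // => y_J _.
  by split; [lia | done | repeat case: ifP; lia].
Qed.

Lemma vset_outside_S t v : v \in vset t -> v \notin S ->
  t < nG /\ (v = Y (J + t) \/ v = X (phi t 0)).
Proof.
rewrite /vset; case: ifP => tn; last by move=> ->.
by rewrite !in_setU1 => /orP[/eqP-> | /orP[/eqP-> | ->]]; auto.
Qed.

Lemma degree_outside_S t : t < k -> forall v, v \in vset t -> v \notin S ->
  1 < degree (parent_edges (vset t) (root t) (par t)) v.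
Proof.
move=> tk v vV vS; have deg2 := parent_edges_degree_gt1 (par_spec tk).
have [tn [v_root | v_hub]] := vset_outside_S vV vS.
  have [x0_root x1_root] : X 0 != root t /\ X 1 != root t by rewrite /root tn.
  have par_X p : par t (X p) = v by rewrite /par /X /xpar tn v_root.
  have X_lt p : p < 2 -> X p \in vset t by move=> ?; rewrite X_in_vset; lia.
  have one_lt_m1 : 1 < m1 by lia.
  apply: (deg2 _ (X 0) (X 1)); rewrite ?inE ?par_X ?eqxx ?orbT ?x0_root ?x1_root ?X_lt //.
  by rewrite {1}/X eqX //= inordK.
have hub_m1 := hub_lt_m1 tn J_gt0; have root_lt : J + t < m2 by lia.
have par_Y0 : par t (Y 0) = v by rewrite /par /Y inordK // /ypar tn v_hub.
have Y0_root : Y 0 != root t by rewrite /root tn eqY //= inordK //; lia.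
have v_root : v != root t by rewrite /root tn v_hub.
apply: (deg2 _ v (Y 0));
  rewrite ?inE ?par_Y0 ?eqxx ?orbT ?Y0_root ?v_root ?Y_in_vset ?vV ?J_gt0 //.
by rewrite v_hub.
Qed.

Lemma S_sub_vset t : S \subset vset t.
Proof.
by rewrite /vset; case: ifP => // _; apply/subsetP => v vS; rewrite !in_setU1 vS !orbT.
Qed.

Lemma vset_meet t t' : t != t' -> vset t :&: vset t' = S.
Proof.
move=> tt'; apply/setP => v; rewrite inE.
apply/andP/idP => [[vt vt'] | vS]; last by rewrite !(subsetP (S_sub_vset _)).
apply: contraT => vS; case/negP: tt'.
have [tn ev] := vset_outside_S vt vS; have [tn' ev'] := vset_outside_S vt' vS.
have root_lt u : u < nG -> J + u < m2 by lia.
case: ev ev' => -> [] // eqv.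
  by have := Y_inj (root_lt _ tn) (root_lt _ tn') eqv; lia.
have := X_inj (hub_lt_m1 tn J_gt0) (hub_lt_m1 tn' J_gt0) eqv.
by move/(hub_inj tn tn' J_gt0 J_gt0) ->.
Qed.

(* The edge [{x_p, y_q}] is recorded as [(p, q)]. *)
Definition edge_xy t (v : T) : nat * nat :=
  match v with inl x => (nat_of_ord x, xpar t x) | inr y => (ypar t y, nat_of_ord y) end.

Definition tree_edge t p q : bool :=
  if t < nG then (q == J + t) && ((p < i) || (p == phi t 0)) || (q < J) && (p == phi t q)
  else [&& p < i, q < J & (p./2 == t - a) && (odd p == odd q)
                          || (q./2 == t - nG) && (odd p != odd q)].

Lemma parent_edge_xy t v : [set v; par t v] = [set X (edge_xy t v).1; Y (edge_xy t v).2].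
Proof. by case: v => [x|y]; rewrite /= ?[[set inr y; _]]setUC /X /Y inord_val. Qed.

Lemma set_XY p q p' q' : p < m1 -> q < m2 -> p' < m1 -> q' < m2 ->
  [set X p; Y q] = [set X p'; Y q'] -> p = p' /\ q = q'.
Proof.
by move=> ? ? ? ? /eq_set2[[/X_inj-> // /Y_inj-> //] | [[]]].
Qed.

Lemma tree_edge_xy t v : t < k -> v \in vset t -> v != root t ->
  tree_edge t (edge_xy t v).1 (edge_xy t v).2.
Proof.
move=> tk; rewrite in_vset /tree_edge /root.
case: v => [x|y] /=; rewrite /xpar /ypar; case: ifP => tn /=.
- by move=> x_in _; rewrite eqxx x_in.
- have [? ?] := pair_bounds tk tn; rewrite eqX; last lia.
  move=> ? ?; lia.
- have root_lt : J + t < m2 by lia.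
  by rewrite eqY // => ? ?; apply/orP; right; rewrite eqxx andbT; lia.
- by have [? ?] := pair_bounds tk tn; move=> ? _; lia.
Qed.

Lemma tree_edge_bounds t p q : t < k -> tree_edge t p q -> p < m1 /\ q < m2.
Proof.
rewrite /tree_edge; case: ifP => tn tk; last lia.
case/orP => /andP[q_cond p_cond]; first by have := hub_lt_m1 tn J_gt0; lia.
by have := hub_lt_m1 tn q_cond; lia.
Qed.

Lemma tree_edge_outer_inner t t' p q : t < nG -> nG <= t' < k ->
  tree_edge t p q -> tree_edge t' p q -> False.
Proof.
move=> tn /andP[tn' t'k]; rewrite /tree_edge tn [t' < nG]ltnNge tn' /=.
case/orP => /andP[q_cond /eqP p_eq]; first lia.
rewrite p_eq; case/and3P => p_i _.
have [] := hub_parity tn q_cond p_i (leq_ltn_trans tn' t'k); lia.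
Qed.

Lemma tree_edge_unique t t' p q : t < k -> t' < k ->
  tree_edge t p q -> tree_edge t' p q -> t = t'.
Proof.
move=> tk t'k; case tn : (t < nG); case tn' : (t' < nG).
- rewrite /tree_edge tn tn'.
  move=> /orP[] /andP[q_cond /eqP p_eq] /orP[] /andP[q_cond' /eqP p_eq']; try lia.
  by apply: hub_inj tn tn' q_cond q_cond' _; rewrite -p_eq -p_eq'.
- by move=> e e'; case: (tree_edge_outer_inner tn _ e e'); rewrite leqNgt tn' t'k.
- by move=> e e'; case: (tree_edge_outer_inner tn' _ e' e); rewrite leqNgt tn tk.
rewrite /tree_edge tn tn'; lia.
Qed.

Lemma edges_differ t t' v w : t < k -> t' < k -> t != t' ->
  v \in vset t :\ root t -> w \in vset t' :\ root t' -> [set v; par t v] != [set w; par t' w].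
Proof.
move=> tk t'k tt'; rewrite !inE => /andP[vr vV] /andP[wr wV]; apply: contraNneq tt'.
have ev := tree_edge_xy tk vV vr; have ew := tree_edge_xy t'k wV wr.
have [b1 b2] := tree_edge_bounds tk ev; have [b1' b2'] := tree_edge_bounds t'k ew.
rewrite !parent_edge_xy => /(set_XY b1 b2 b1' b2') [e1 e2].
by rewrite e1 e2 in ev; rewrite (tree_edge_unique tk t'k ev ew).
Qed.

Definition hub t (v : T) : Prop :=
  match v with
  | inl x => if t < nG then exists2 q, q < J & phi t q = x else x./2 = t - a
  | inr y => nG <= t /\ y./2 = t - nG
  end.

Lemma parent_internal_hub t v : t < k -> v \in S ->
  parent_internal (vset t) (root t) (par t) v -> hub t v.
Proof.
move=> tk vS; case/orP => [/eqP v_root | /existsP[w /andP[]]].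
  move: vS; rewrite v_root /root /hub; case: ifP => tn.
    by rewrite in_S /= inordK; lia.
  by have [? ?] := pair_bounds tk tn; rewrite /= inordK; lia.
rewrite !inE => /andP[w_root wV] /eqP v_par; subst v.
move: w_root wV vS; rewrite in_vset /root /par /hub /xpar /ypar.
case: w => [x|y]; case: ifP => tn.
- have root_lt : J + t < m2 by lia.
  by move=> _ _; rewrite in_S /= inordK //; lia.
- have [? ?] := pair_bounds tk tn.
  by move=> _ _ _; rewrite /= inordK; lia.
- have root_lt : J + t < m2 by lia.
  rewrite eqY // => y_root y_in _; have y_J : y < J by lia.
  by rewrite /= inordK ?tn; [exists y | apply: hub_lt_m1].
- have [? ?] := pair_bounds tk tn.
  by move=> _ _ _; rewrite /= inordK ?tn; lia.
Qed.

Lemma hub_unique t t' v : t < k -> t' < k -> v \in S -> hub t v -> hub t' v -> t = t'.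
Proof.
move=> tk t'k; rewrite in_S /hub; case: v => [x|y] vS; last lia.
have outer_inner u u' : u < nG -> nG <= u' < k ->
    (exists2 q, q < J & phi u q = x) -> x./2 = u' - a -> False.
  move=> un /andP[un' u'k] [q q_J hub_x]; rewrite -hub_x in vS *.
  by have [] := hub_parity un q_J vS (leq_ltn_trans un' u'k); lia.
case tn : (t < nG); case tn' : (t' < nG).
- by move=> [q q_J <-] [q' q'_J] /esym; apply: hub_inj.
- by move=> ? ?; case: (outer_inner t t'); rewrite // leqNgt tn' t'k.
- by move=> ? ?; case: (outer_inner t' t); rewrite // leqNgt tn tk.
- lia.
Qed.

Lemma kappa_star_ge_construction : k <= m1 -> k <= kappa_star (@Kbip_adj m1 m2) S.
Proof.
move=> k_m1; apply: kappa_star_ge.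
  apply: (@parent_family_completely_independent _ _ _ _ _ _ _ (fun t => depth t)).
  - by move=> t; exact: root_in_vset.
  - by move=> t; exact: par_spec (ltn_ord t).
  - by move=> t; apply: S_sub_vset.
  - by move=> t; exact: degree_outside_S (ltn_ord t).
  - by move=> t t' tt'; apply: vset_meet.
  - by move=> t t' v w tt'; exact: edges_differ.
  move=> t t' v vS int_t int_t'; apply: val_inj.
  apply: (hub_unique (ltn_ord t) (ltn_ord t') vS).
    exact: parent_internal_hub (ltn_ord t) vS int_t.
  exact: parent_internal_hub (ltn_ord t') vS int_t'.
apply: leq_trans (leq_card _ (@set1_inj _)); rewrite card_sum !card_ord; lia.
Qed.

End CompleteBipartite.

Lemma kappa_star_Kbip_ge_min n1 n2 s i k : 2 <= i <= n1.+1 -> 0 < s - i ->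
  k <= n1.+1 -> s - i + k <= n2.+1 ->
  k <= kappa_star (@Kbip_adj n1.+1 n2.+1) (S_set n1.+1 n2.+1 s i).
Proof.
move=> /andP[two_i i_m1] J_gt0 k_m1 k_m2.
by apply: (@kappa_star_ge_construction n1 n2 s i k k 0 (fun t _ => t)); lia.
Qed.

Lemma kappa_star_Kbip_ge_pairs n1 n2 s i : 2 <= i <= n1.+1 -> 0 < s - i <= n2.+1 ->
  n1 <= n2 -> n1.+1 - i < n2.+1 - (s - i) -> 2 * ((n2.+1 - (s - i)) - (n1.+1 - i)) <= i ->
  n1.+1 - i + i./2 <= kappa_star (@Kbip_adj n1.+1 n2.+1) (S_set n1.+1 n2.+1 s i).
Proof.
move=> /andP[two_i i_m1] /andP[J_gt0 J_m2] m1_m2 free_lt c_le.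
pose phi t q := if t < n1.+1 - i then i + t else 2 * (t - (n1.+1 - i)) + odd q.
apply: (@kappa_star_ge_construction n1 n2 s i _ (n2.+1 - (s - i)) (n1.+1 - i) phi); try lia;
  rewrite /phi.
- by move=> t q t_lt _; case: ifP; lia.
- by move=> t q t_lt _; case: ifP => ?; [right | left]; lia.
- by move=> t t' q q' t_lt t'_lt _ _; case: ifP; case: ifP; lia.
- by move=> t q t_lt _; case: ifP; lia.
Qed.

Unset Implicit Arguments.
Theorem theorem3p7 (m1 m2 s i : nat) :
  2 <= m1 -> m1 <= m2 ->
  maxn 1 (s - m2) <= i -> i <= minn m1 (s - 1) ->
  m2 - m1 + 3 <= s ->
  m1 + s - m2 < 2 * i ->
  let L := m1 + s - m2 in
  let k := kappa_star (@Kbip_adj m1 m2) (S_set m1 m2 s i) in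
  [/\ 2 * i * 3 <= 4 * L -> m1 - i + i./2 <= k,
      4 * L < 2 * i * 3 -> 2 * i <= 2 * L -> m2 + i - s <= k &
      2 * L < 2 * i -> m1 <= k].
Proof.
case: m1 => [//|n1]; case: m2 => [//|n2] two_m1 m1_m2 i_lo i_hi s_lo L_lt L k.
split=> [small_i | _ mid_i | large_i].
- by apply: kappa_star_Kbip_ge_pairs; lia.
- by apply: kappa_star_Kbip_ge_min; lia.
- by apply: kappa_star_Kbip_ge_min; lia.
Qed.
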